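(* Let $A, B, C, F \in \mathbb{R}^{n\times n}$ with $A$ and $C$ non-singular, and let $I$ be the $n\times n$ identity matrix. Suppose that $$\rho\left((I\otimes CA^{-1}B)D\right) < 1$$ for every diagonal matrix $D = \mathrm{diag}(d_i) \in \mathbb{R}^{n^2\times n^2}$ with all $d_i \in [-1,1]$. Then the matrix equation $$AX + B\lvert CX\rvert = F$$ has exactly one solution $X \in \mathbb{R}^{n\times n}$.
   Context: $\otimes$ denotes the Kronecker product, $\rho(\cdot)$ the spectral radius, and $\lvert M\rvert$ the entrywise absolute value. *)

(* Real matrices over an arbitrary real closed field R
   (the reals are one instance); complex numbers are R[i] from
   mathcomp-real-closed, Kronecker product is tensmx from mxtens. *)
From HB Require Import structures.
From mathcomp Require Import all_boot all_order all_algebra.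
From mathcomp Require Import complex mxtens.
Set Implicit Arguments. Unset Strict Implicit. Unset Printing Implicit Defensive.
Import Order.TTheory GRing.Theory Num.Theory.
Local Open Scope ring_scope.

Definition complexify (R : rcfType) (n : nat) (M : 'M[R]_n) : 'M[R[i]]_n :=
  map_mx (fun x => x%:C%C) M.

(* The spectrum (eigenvalues with algebraic multiplicity) of a real square
   matrix: the roots in C = R[i] of its characteristic polynomial, obtained
   from the splitting of char_poly over the algebraically closed field R[i]. *)
Definition spectrum (R : rcfType) (n : nat) (M : 'M[R]_n) : seq R[i] :=
  proj1_sig (closed_field_poly_normal (char_poly (complexify M))).

(* Spectral radius: the maximal modulus of an eigenvalue (0 for n = 0). *)
Definition spectral_radius (R : rcfType) (n : nat) (M : 'M[R]_n) : R :=
  \big[Num.max/0]_(z <- spectrum M) Normc.normc z.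

Notation kron A B := (tensmx A B).

Definition mxabs (R : numDomainType) (m n : nat) (M : 'M[R]_(m, n)) :
  'M[R]_(m, n) := map_mx (fun x => `|x|) M.

From HB Require Import structures.
From mathcomp Require Import all_boot all_order all_algebra.
From mathcomp Require Import complex mxtens.
From mathcomp Require Import ring lra.
Import Order.TTheory GRing.Theory Num.Theory.
Local Open Scope ring_scope.
Set Implicit Arguments. Unset Strict Implicit. Unset Printing Implicit Defensive.

(* Call M box-regular when I + M D is nonsingular for every diagonal D with
   entries in [-1, 1].  Then x |-> x + M |x| is a bijection: it is injective
   because |x| - |y| = D (x - y) for such a D, and surjective by induction on
   the dimension.  Guessing the sign s of the first coordinate makes the first
   equation linear; eliminating that coordinate leaves an equation of the same
   shape for a Schur complement of M, which is again box-regular.  If neither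
   guess s = 1 nor s = -1 produces a consistent sign, the two candidates
   contradict injectivity.
   The spectral hypothesis gives box-regularity of M = C A^-1 B: a nonzero z
   with (I + M D) z = 0 makes 1 (x) z an eigenvector of (I (x) M) diag(1 (x) d)
   for the eigenvalue -1.  Substituting Y = C X, the matrix equation becomes
   Y + M |Y| = C A^-1 F, which is solved column by column. *)

Section BoxRegular.
Variable R : realFieldType.

Lemma le_norm_scale (u v : R) :
  `|u| <= `|v| -> exists2 k, -1 <= k <= 1 & u = k * v.
Proof.
move=> le_uv; exists (u / v).
  rewrite -ler_norml normrM normfV.
  have [->|v0] := eqVneq v 0; first by rewrite normr0 invr0 mulr0.
  by rewrite ler_pdivrMr ?normr_gt0 // mul1r.
have [v0|v0] := eqVneq v 0; last by rewrite divfK.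
by move: le_uv; rewrite v0 normr0 normr_le0 => /eqP->; rewrite !mul0r.
Qed.

Lemma le_mxabs_diag n (u z : 'cV[R]_n) :
  (forall i, `|u i 0| <= `|z i 0|) ->
  exists2 d : 'rV[R]_n, (forall i, -1 <= d 0 i <= 1) & u = diag_mx d *m z.
Proof.
move=> le_uz; have [k k_box ukz] := fin_all_exists2 (fun i => le_norm_scale (le_uz i)).
exists (\row_i k i) => [i|]; first by rewrite mxE.
by apply/colP => i; rewrite mul_diag_mx !mxE.
Qed.

(* With u = D z (see le_mxabs_diag), this says that I + M D is nonsingular
   for every diagonal D with entries in [-1, 1]. *)
Definition box_regular n (M : 'M[R]_n) :=
  forall z u : 'cV[R]_n, (forall i, `|u i 0| <= `|z i 0|) -> z + M *m u = 0 -> z = 0.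

Lemma box_regular_inj n (M : 'M[R]_n) (x y u v : 'cV[R]_n) : box_regular M ->
  (forall i, `|(u - v) i 0| <= `|(x - y) i 0|) ->
  x + M *m u = y + M *m v -> x = y.
Proof.
move=> regM le_uv eq_xy; apply/eqP; rewrite -subr_eq0; apply/eqP.
apply: (regM _ (u - v)) => //.
by rewrite mulmxBr addrACA -opprD eq_xy subrr.
Qed.

Lemma ave_inj n (M : 'M[R]_n) (x y : 'cV[R]_n) : box_regular M ->
  x + M *m mxabs x = y + M *m mxabs y -> x = y.
Proof. by move=> regM; apply: box_regular_inj => // i; rewrite !mxE ler_dist_dist. Qed.

Lemma mxabs_col_scalar n (t : R) (y : 'cV[R]_n) :
  mxabs (col_mx t%:M y) = col_mx `|t|%:M (mxabs y).
Proof.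
by rewrite /mxabs map_col_mx; congr col_mx; apply/matrixP => i j; rewrite !ord1 !mxE.
Qed.

Lemma le_norm_col_scalar n (s t : R) (u z : 'cV[R]_n) :
  `|s| <= `|t| -> (forall i, `|u i 0| <= `|z i 0|) ->
  forall i, `|col_mx s%:M u i 0| <= `|col_mx t%:M z i 0|.
Proof. by move=> le_st le_uz i; rewrite !mxE; case: splitP => j _; rewrite ?ord1 ?mxE. Qed.

Section PivotStep.
Variables (n : nat) (a : R) (b : 'rV[R]_n) (c : 'cV[R]_n) (e : 'M[R]_n).
Local Notation M := (block_mx a%:M b c e).
Hypothesis regM : box_regular M.

Lemma mul_pivot_block (t : R) (v : 'cV[R]_n) :
  M *m col_mx t%:M v = col_mx (a * t + (b *m v) 0 0)%:M (t *: c + e *m v).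
Proof.
by rewrite mul_block_col -scalar_mxM mul_mx_scalar raddfD /= -mx11_scalar.
Qed.

Lemma pivot_neq0 s : -1 <= s <= 1 -> 1 + a * s != 0.
Proof.
move=> s_box; apply/negP => /eqP as0.
have: col_mx (1%:M : 'M_1) (- (s *: c)) = 0.
  apply: (regM (u := col_mx s%:M 0)).
    by apply: le_norm_col_scalar => [|i]; [rewrite normr1 ler_norml // | rewrite mxE normr0].
  by rewrite mul_pivot_block !mulmx0 mxE !addr0 add_col_mx -raddfD /= as0 addNr raddf0 col_mx0.
move/eqP; rewrite col_mx_eq0 => /andP[/eqP/matrixP/(_ 0 0)].
by rewrite !mxE /= => /eqP; rewrite oner_eq0.
Qed.

Lemma schur_box_regular s :
  -1 <= s <= 1 -> box_regular (e - (s / (1 + a * s)) *: (c *m b)).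
Proof.
move=> s_box z u le_uz.
have pivot_nz := pivot_neq0 s_box.
rewrite mulmxBl -scalemxAl -mulmxA [b *m u]mx11_scalar mul_mx_scalar scalerA.
pose t := - (b *m u) 0 0 / (1 + a * s).
move=> zSu; have: col_mx t%:M z = 0.
  apply: (regM (u := col_mx (s * t)%:M u)).
    apply: le_norm_col_scalar => //.
    by rewrite normrM ler_piMl // ler_norml.
  rewrite mul_pivot_block add_col_mx -raddfD /=.
  apply/eqP; rewrite col_mx_eq0; apply/andP; split; apply/eqP.
    suff ->: t + (a * (s * t) + (b *m u) 0 0) = 0 by rewrite raddf0.
    by rewrite /t; field.
  rewrite -[RHS]zSu; congr (z + _); rewrite addrC; congr (_ + _).
  by rewrite -scaleNr /t; congr (_ *: _); field.
by move/eqP; rewrite col_mx_eq0 => /andP[_ /eqP].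
Qed.

Hypothesis ave_surj_n : forall M' : 'M[R]_n, box_regular M' ->
  forall g : 'cV[R]_n, exists x, x + M' *m mxabs x = g.

Lemma pivot_signed_solvable s (g : 'cV[R]_(1 + n)) : -1 <= s <= 1 ->
  exists t y, col_mx t%:M y + M *m col_mx (s * t)%:M (mxabs y) = g.
Proof.
move=> s_box; have pivot_nz := pivot_neq0 s_box.
rewrite -[g]vsubmxK [usubmx g]mx11_scalar.
pose g1 := usubmx g 0 0.
have [y hy] := ave_surj_n (schur_box_regular s_box)
                 (dsubmx g - (s * g1 / (1 + a * s)) *: c).
exists ((g1 - (b *m mxabs y) 0 0) / (1 + a * s)), y.
rewrite mul_pivot_block add_col_mx -raddfD /=; congr col_mx.
  by congr _%:M; rewrite /g1; field.
rewrite mulmxBl -scalemxAl -mulmxA [b *m mxabs y]mx11_scalar mul_mx_scalar scalerA in hy.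
rewrite -[RHS](subrK ((s * g1 / (1 + a * s)) *: c)) -hy.
move: (e *m mxabs y) => E; apply/colP => i; rewrite !mxE /g1.
by field.
Qed.

Lemma pivot_block_ave_surj (g : 'cV[R]_(1 + n)) : exists x, x + M *m mxabs x = g.
Proof.
have [t1 [y1 h1]] := @pivot_signed_solvable 1 g ltac:(apply/andP; split; lra).
have [t2 [y2 h2]] := @pivot_signed_solvable (-1) g ltac:(apply/andP; split; lra).
have [t1_ge0|t1_lt0] := lerP 0 t1.
  by exists (col_mx t1%:M y1); rewrite mxabs_col_scalar ger0_norm // -h1 mul1r.
have [t2_le0|t2_gt0] := lerP t2 0.
  by exists (col_mx t2%:M y2); rewrite mxabs_col_scalar ler0_norm // -h2 mulN1r.
(* Now t1 < 0 < t2: neither sign guess is consistent. *)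
have: col_mx t1%:M y1 = col_mx t2%:M y2.
  apply: (box_regular_inj regM (u := col_mx (1 * t1)%:M (mxabs y1))
                              (v := col_mx (-1 * t2)%:M (mxabs y2))); last by rewrite h1 h2.
  rewrite !opp_col_mx !add_col_mx -!raddfB /=.
  apply: le_norm_col_scalar => [|i]; last by rewrite !mxE ler_dist_dist.
  rewrite mul1r mulN1r opprK (ler0_norm (x := t1 - t2)) ?ler_norml; lra.
case/eq_col_mx => /matrixP/(_ 0 0); rewrite !mxE /= !mulr1n => t12 _.
by move: t1_lt0; rewrite t12 ltNge (ltW t2_gt0).
Qed.

End PivotStep.

Lemma box_regular_ave_surj n (M : 'M[R]_n) : box_regular M ->
  forall g : 'cV[R]_n, exists x, x + M *m mxabs x = g.
Proof.
elim: n M => [|n IH] M regM g; first by exists 0; apply/matrixP => -[].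
rewrite -[M](submxK (M : 'M_(1 + n))) [ulsubmx _]mx11_scalar in regM *.
exact: pivot_block_ave_surj regM IH g.
Qed.

Lemma col_ave n p (M : 'M[R]_n) (Y : 'M[R]_(n, p)) j :
  col j (Y + M *m mxabs Y) = col j Y + M *m mxabs (col j Y).
Proof. by rewrite !colE mulmxDl -mulmxA -colE /mxabs map_col -colE. Qed.

Lemma box_regular_mx_ave n p (M : 'M[R]_n) (G : 'M[R]_(n, p)) :
  box_regular M -> exists! Y, Y + M *m mxabs Y = G.
Proof.
move=> regM.
have /fin_all_exists [y hy] j : exists x, x + M *m mxabs x = col j G.
  exact: box_regular_ave_surj.
pose Y := \matrix_(i, j) y j i 0.
have colY j : col j Y = y j by apply/colP => i; rewrite !mxE.
exists Y; split.
  by apply/matrixP => i j; have /colP/(_ i) := col_ave M Y j; rewrite colY hy !mxE.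
move=> Y' hY'; apply/matrixP => i j.
have /colP/(_ i) : col j Y' = y j by apply: (ave_inj regM); rewrite -col_ave hY' hy.
by rewrite !mxE.
Qed.

End BoxRegular.

Lemma char_poly_trmx (R : comNzRingType) n (K : 'M[R]_n) :
  char_poly K^T = char_poly K.
Proof.
rewrite /char_poly -[RHS]det_tr; congr (\det _).
by apply/matrixP => i j; rewrite !mxE eq_sym.
Qed.

Lemma normc_real (R : rcfType) (x : R) : Normc.normc x%:C%C = `|x|.
Proof. by rewrite /Normc.normc /= expr0n /= addr0 sqrtr_sqr. Qed.

Lemma eigenvector_le_spectral_radius (R : rcfType) n (K : 'M[R]_n) l (w : 'cV[R]_n) :
  w != 0 -> K *m w = l *: w -> `|l| <= spectral_radius K.
Proof.
move=> w_neq0 Kw.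
have: eigenvalue K^T l.
  apply/eigenvalueP; exists w^T; last by rewrite trmx_eq0.
  by rewrite -trmx_mul Kw linearZ.
rewrite eigenvalue_root_char char_poly_trmx => /(rmorph_root (real_complex R)).
rewrite map_char_poly /spectral_radius /spectrum.
case: closed_field_poly_normal => s /= ->.
rewrite (monicP (char_poly_monic _)) scale1r root_prod_XsubC => l_in_s.
by rewrite -normc_real; apply: le_bigmax_seq.
Qed.

Lemma diag_mx_tens (R : pzRingType) m n (x : 'rV[R]_m) (y : 'rV[R]_n) :
  diag_mx (x *t y) = diag_mx x *t diag_mx y.
Proof.
apply/matrixP => k l; case: (mxtens_indexP k) => i j; case: (mxtens_indexP l) => i' j'.
rewrite tensmxE !mxE !mxtens_indexK (inj_eq (can_inj (@mxtens_indexK _ _))) xpair_eqE.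
rewrite /= mulrnAr mulrnAl -mulrnA mulnb.
by congr (x _ _ * y _ _ *+ _); apply: ord1.
Qed.

Lemma spectral_box_regular (R : rcfType) n (M : 'M[R]_n) :
  (forall d : 'rV[R]_(n * n), (forall k, -1 <= d 0 k <= 1) ->
     spectral_radius (kron (1%:M : 'M[R]_n) M *m diag_mx d) < 1) ->
  box_regular M.
Proof.
move=> rho_lt1 z u le_uz zMu; apply/eqP/negPn/negP => z_neq0.
have [d d_box u_dz] := le_mxabs_diag le_uz.
pose w := (const_mx 1 : 'cV[R]_n) *t z.
have w_neq0 : w != 0.
  apply: contra z_neq0 => /eqP w0; apply/eqP/colP => i.
  have /matrixP/(_ (mxtens_index (i, i)) (mxtens_index (0, 0))) := w0.
  by rewrite tensmxE !mxE mul1r.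
have Mdz : M *m (diag_mx d *m z) = -1 *: z.
  by rewrite scaleN1r -u_dz; apply/eqP; rewrite -addr_eq0 addrC zMu.
have D_box k : -1 <= ((const_mx 1 : 'rV[R]_n) *t d) 0 k <= 1.
  by rewrite !mxE mul1r [X in d X _]ord1.
have := rho_lt1 _ D_box; rewrite ltNge => /negP; apply.
rewrite -[leLHS](normrN1 R); apply: (eigenvector_le_spectral_radius w_neq0).
rewrite /w diag_mx_tens diag_const_mx -mulmxA (tensmx_mul _ _ (const_mx 1 : 'cV[R]_n) z).
rewrite mul1mx (tensmx_mul _ _ (const_mx 1 : 'cV[R]_n) (diag_mx d *m z)) mul1mx Mdz.
by apply/matrixP => i j; rewrite !mxE mulrCA.
Qed.

Unset Implicit Arguments.

Theorem theorem4p5 (R : rcfType) (n : nat) (A B C F : 'M[R]_n) :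
  A \in unitmx -> C \in unitmx ->
  (forall d : 'rV[R]_(n * n),
      (forall k, -1 <= d 0 k <= 1) ->
      spectral_radius
        (kron (1%:M : 'M[R]_n) (C *m invmx A *m B) *m diag_mx d) < 1) ->
  exists! X : 'M[R]_n, A *m X + B *m mxabs (C *m X) = F.
Proof.
move=> uA uC /spectral_box_regular regM.
have [Y [hY uniqY]] := box_regular_mx_ave (C *m invmx A *m F) regM.
have ave_CX X : A *m X + B *m mxabs (C *m X) = F <->
    C *m X + C *m invmx A *m B *m mxabs (C *m X) = C *m invmx A *m F.
  split=> [<-|eqCX]; first by rewrite mulmxDr !mulmxA mulmxKV.
  have := congr1 (mulmx (A *m invmx C)) eqCX.
  by rewrite mulmxDr !mulmxA !mulmxKV // mulmxV // !mul1mx.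
exists (invmx C *m Y); split; first by apply/ave_CX; rewrite mulKVmx.
by move=> X /ave_CX /uniqY ->; rewrite mulKmx.
Qed.
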